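(* Let $s$ be a sequence of positive integers. The set of peakless $s$-words $\mathrm{Av}_s(132,231,121)$ is contained in every zig-zag language $L\subseteq S_s$.
   Context: For a sequence $s=(s_1,\dots,s_m)$ of positive integers, an $s$-word is a word with exactly $s_i$ copies of $i$ for each $i\in[m]$; $S_s$ is the set of $s$-words. A word $w$ contains a pattern $\alpha=\alpha_1\cdots\alpha_\ell$ (over $[k]$, using all values of $[k]$) if there are indices $i_1<\dots<i_\ell$ with $w_{i_a}<w_{i_b}$ iff $\alpha_a<\alpha_b$ and $w_{i_a}=w_{i_b}$ iff $\alpha_a=\alpha_b$; $\mathrm{Av}_s(132,231,121)$ is the set of $s$-words containing none of $132$, $231$, $121$. Parent operation: $p(s)=(s_1,\dots,s_{m-1},s_m-1)$ if $s_m>1$ and $p(s)=(s_1,\dots,s_{m-1})$ if $s_m=1$; for an $s$-word $w$, $p(w)$ deletes the rightmost copy of $m$; $p(L)=\{p(w):w\in L\}$. Zig-zag language (recursive on $n=\sum s_i$): for the empty sequence the only zig-zag language is $\{\varepsilon\}$. For $n\ge1$, $L\subseteq S_s$ is zig-zag if $p(L)$ is a zig-zag language of $p(s)$-words and for every $w'\in p(L)$ both of the following lie in $L$: (a) $w'm$, and (b) $mw'$ if $s_m=1$, or, if $s_m>1$, the word obtained by inserting $m$ immediately next to the rightmost $m$ of $w'$. *)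

From mathcomp Require Import all_boot.
Set Implicit Arguments. Unset Strict Implicit. Unset Printing Implicit Defensive.

(* s = (s_1,...,s_m) is [s : seq nat], with s_i = nth 0 s i.-1 and m = size s. *)

Definition is_sword (s : seq nat) (w : seq nat) : bool :=
  all (fun x => 0 < x <= size s) w &&
  all (fun i => count_mem i w == nth 0 s i.-1) (iota 1 (size s)).

Definition contains_pat (w alpha : seq nat) : Prop :=
  exists u : seq nat, [/\ subseq u w, size u = size alpha &
    forall a b, a < size alpha -> b < size alpha ->
      ((nth 0 u a < nth 0 u b) = (nth 0 alpha a < nth 0 alpha b)) /\
      ((nth 0 u a == nth 0 u b) = (nth 0 alpha a == nth 0 alpha b))].

Definition peakless (s w : seq nat) : Prop :=
  is_sword s w /\ ~ contains_pat w [:: 1; 3; 2] /\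
  ~ contains_pat w [:: 2; 3; 1] /\ ~ contains_pat w [:: 1; 2; 1].

Definition parent_seq (s : seq nat) : seq nat :=
  if 1 < last 0 s then rcons (take (size s).-1 s) (last 0 s).-1
  else take (size s).-1 s.

Definition parent_word (m : nat) (w : seq nat) : seq nat :=
  rev (rem m (rev w)).

Definition dup_rightmost (m : nat) (w : seq nat) : seq nat :=
  let r := rev w in let k := index m r in
  rev (take k r ++ m :: drop k r).

Definition parent_lang (m : nat) (L : seq nat -> Prop) : seq nat -> Prop :=
  fun u => exists2 w, L w & u = parent_word m w.

Inductive zigzag : seq nat -> (seq nat -> Prop) -> Prop :=
| zigzag_nil (L : seq nat -> Prop) :
    (forall w, L w <-> w = [::]) -> zigzag [::] L
| zigzag_step (s : seq nat) (L : seq nat -> Prop) :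
    s <> [::] ->
    (forall w, L w -> is_sword s w) ->
    zigzag (parent_seq s) (parent_lang (size s) L) ->
    (forall w', parent_lang (size s) L w' ->
       L (rcons w' (size s)) /\
       L (if last 0 s == 1 then size s :: w' else dup_rightmost (size s) w')) ->
    zigzag s L.

From mathcomp Require Import all_boot zify.

(* Let m be the largest letter of a peakless s-word w.  No copy of m has
   smaller letters on both sides, so either w ends with m, or all copies of m
   form a prefix of w.  In the first case w = p(w) m; in the second, w = m p(w)
   when s_m = 1 and otherwise w arises from p(w) by doubling its rightmost m.
   As p(w) is again peakless, induction along the zig-zag structure puts p(w)
   in p(L), and the closure rules (a), (b) then put w in L. *)

Set Implicit Arguments.
Unset Strict Implicit.
Unset Printing Implicit Defensive.

Lemma contains_pat_subseq u w alpha :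
  subseq u w -> contains_pat u alpha -> contains_pat w alpha.
Proof. by move=> uw [v [vu sz iso]]; exists v; split=> //; apply: subseq_trans uw. Qed.

Lemma parent_word_subseq m w : subseq (parent_word m w) w.
Proof. by rewrite /parent_word -{2}(revK w) subseq_rev rem_subseq. Qed.

Lemma count_parent_word m w i :
  m \in w -> count_mem i (parent_word m w) = count_mem i w - (m == i).
Proof.
move=> mw; rewrite /parent_word count_rev.
have /permP/(_ (pred1 i)) : perm_eq (rev w) (m :: rem m (rev w)).
  by apply: perm_to_rem; rewrite mem_rev.
rewrite /= count_rev => ->; lia.
Qed.

Lemma parent_word_rcons m w : parent_word m (rcons w m) = w.
Proof. by rewrite /parent_word rev_rcons /= eqxx revK. Qed.

Lemma parent_word_nseq_cat m k t :
  m \notin t -> parent_word m (nseq k.+1 m ++ t) = nseq k m ++ t.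
Proof.
move=> mt; rewrite /parent_word rev_cat rev_nseq.
have -> : rem m (rev t ++ nseq k.+1 m) = rev t ++ nseq k m.
  rewrite -mem_rev in mt; elim: (rev t) mt => [|x r IH]; first by rewrite /= eqxx.
  by rewrite in_cons negb_or eq_sym => /andP[/negbTE /= -> /IH ->].
by rewrite rev_cat rev_nseq revK.
Qed.

Lemma dup_rightmost_nseq_cat m k t :
  m \notin t -> dup_rightmost m (nseq k.+1 m ++ t) = nseq k.+2 m ++ t.
Proof.
move=> mt; rewrite /dup_rightmost.
have -> : rev (nseq k.+1 m ++ t) = rev t ++ nseq k.+1 m by rewrite rev_cat rev_nseq.
rewrite index_cat mem_rev (negbTE mt) /= eqxx addn0.
rewrite take_size_cat ?size_rev // drop_size_cat ?size_rev //.
by rewrite rev_cat revK -[m :: _]/(nseq k.+2 m) rev_nseq.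
Qed.

Lemma nseq_cat_cons_neq (m x : nat) w :
  last x w != m -> exists k y t, [/\ x :: w = nseq k m ++ y :: t & y != m].
Proof.
elim: w x => [|x' w IH] x /=; first by exists 0, x, [::].
have [-> /IH [k [y [t [-> ym]]]] | xm _] := eqVneq x m; first by exists k.+1, y, t.
by exists 0, x, (x' :: w).
Qed.

Lemma peak_subseq (x m y : nat) t :
  m \in t -> last x t = y -> y != m -> subseq [:: x; m; y] (x :: t).
Proof.
case/lastP: t => // t z; rewrite last_rcons mem_rcons in_cons => mt <- zm.
rewrite eq_sym (negbTE zm) /= in mt.
by rewrite /= eqxx -cats1 -[[:: m; z]]/([:: m] ++ [:: z]) cat_subseq // sub1seq.
Qed.

Lemma peak_free_shape m w :
  m \in w -> {in w, forall x, x <= m} ->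
  (forall x y, x < m -> y < m -> ~~ subseq [:: x; m; y] w) ->
  (exists w1, w = rcons w1 m) \/
  (exists t, w = nseq (count_mem m w) m ++ t /\ m \notin t).
Proof.
case: w => // x0 w mw le_m no_peak.
have [lm | lm] := eqVneq (last x0 w) m.
  by left; exists (belast x0 w); rewrite lastI lm.
have [k [y [t [e ym]]]] := nseq_cat_cons_neq lm.
have e_last : last x0 w = last y t by rewrite -[last x0 w]/(last 0 (x0 :: w)) e last_cat.
right; rewrite e_last e in lm mw le_m no_peak *.
have lt_m z : z \in nseq k m ++ y :: t -> z != m -> z < m.
  by move=> zw zm; rewrite ltn_neqAle zm le_m.
have lt_last : last y t < m by apply: lt_m lm; rewrite mem_cat mem_last orbT.
have mt : m \notin y :: t.
  rewrite in_cons eq_sym (negbTE ym) /=; apply/negP => mt.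
  have y_w : y \in nseq k m ++ y :: t by rewrite mem_cat mem_head orbT.
  move/negP: (no_peak y (last y t) (lt_m y y_w ym) lt_last); apply.
  apply: subseq_trans (suffix_subseq (nseq k m) _).
  exact: peak_subseq mt erefl lm.
exists (y :: t); split=> //.
by rewrite count_cat count_nseq (count_memPn mt) /= eqxx mul1n addn0.
Qed.

Lemma is_swordP s w :
  reflect ({in w, forall x, 0 < x <= size s} /\
           forall i, 0 < i <= size s -> count_mem i w = nth 0 s i.-1)
          (is_sword s w).
Proof.
apply: (iffP andP) => [[/allP letters /allP counts] | [letters counts]].
  by split=> // i i_s; apply/eqP/counts; rewrite mem_iota; lia.
split; first exact/allP.
by apply/allP => i; rewrite mem_iota => i_s; apply/eqP/counts; lia.
Qed.

Lemma parent_seq_rcons s0 a :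
  parent_seq (rcons s0 a) = if 1 < a then rcons s0 a.-1 else s0.
Proof.
have e : take (size s0) (rcons s0 a) = s0 by rewrite -cats1 take_size_cat.
by rewrite /parent_seq last_rcons size_rcons /= e.
Qed.

Lemma sword_count_last s0 a w :
  is_sword (rcons s0 a) w -> count_mem (size s0).+1 w = a.
Proof.
case/is_swordP=> _ /(_ (size s0).+1).
rewrite size_rcons nth_rcons ltnn eqxx; apply; lia.
Qed.

Lemma sword_parent s0 a w : 0 < a -> is_sword (rcons s0 a) w ->
  is_sword (parent_seq (rcons s0 a)) (parent_word (size s0).+1 w).
Proof.
move=> a_gt0 sw; have count_m := sword_count_last sw.
case/is_swordP: sw; rewrite size_rcons; set m := (size s0).+1 => letters counts.
have m_w : m \in w by rewrite -has_pred1 has_count count_m.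
have count_p i : 0 < i ->
    count_mem i (parent_word m w) = nth 0 (rcons s0 a) i.-1 - (m == i).
  move=> i_gt0; rewrite count_parent_word //.
  have [i_le_m | i_gt_m] := leqP i m; first by rewrite counts ?i_gt0.
  rewrite nth_default ?size_rcons; last by lia.
  by rewrite (count_memPn _) //; apply/negP => /letters; lia.
have letters_p x : x \in parent_word m w -> 0 < x <= m.
  by move/(mem_subseq (parent_word_subseq m w)); apply: letters.
rewrite parent_seq_rcons; apply/is_swordP; case: (ltnP 1 a) => a_gt1.
  split=> [x /letters_p | i]; rewrite size_rcons // => i_s.
  by rewrite count_p ?nth_rcons; [case: ltngtP; rewrite ?eqxx; lia | lia].
have count_pm : count_mem m (parent_word m w) = 0.
  by rewrite count_p // nth_rcons /m /= ltnn eqxx; lia.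
split=> [x x_p | i i_s].
  have x_neq_m : x != m.
    by apply: contraTneq x_p => ->; rewrite -has_pred1 has_count count_pm.
  by have := letters_p x x_p; lia.
by rewrite count_p ?nth_rcons; case: ltngtP; lia.
Qed.

Lemma sword_nil w : is_sword [::] w -> w = [::].
Proof. by case/is_swordP; case: w => // x w /(_ x (mem_head x w)) /= x_in _; lia. Qed.

Lemma all_pos_parent_seq s0 a :
  all (fun x => 0 < x) (rcons s0 a) -> all (fun x => 0 < x) (parent_seq (rcons s0 a)).
Proof.
rewrite parent_seq_rcons !all_rcons => /andP[a_gt0 s0_pos].
by case: ifP => // a_gt1; rewrite all_rcons s0_pos andbT; lia.
Qed.

Lemma peakless_no_peak s w x m y :
  peakless s w -> x < m -> y < m -> ~~ subseq [:: x; m; y] w.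
Proof.
move=> [_ [no132 [no231 no121]]] xm ym; apply/negP => peak.
case: (ltngtP x y) => xy; [apply: no132 | apply: no231 | apply: no121];
  exists [:: x; m; y]; split=> // [[|[|[|a]]] [|[|[|b]]]] //= _ _;
  split; apply/idP/idP; lia.
Qed.

Lemma peakless_parent s0 a w : 0 < a -> peakless (rcons s0 a) w ->
  peakless (parent_seq (rcons s0 a)) (parent_word (size s0).+1 w).
Proof.
move=> a_gt0 [sw [no132 [no231 no121]]].
have sub := contains_pat_subseq (parent_word_subseq (size s0).+1 w).
by split; [exact: sword_parent | split; [|split] => /sub].
Qed.

Theorem mainTheorem6 (s : seq nat) (L : seq nat -> Prop) :
  all (fun x => 0 < x) s -> zigzag s L ->
  forall w : seq nat, peakless s w -> L w.
Proof.
move=> s_pos zz; elim: zz s_pos => {s L} [L L_nil | s L s_nonnil _ _ IH L_closed] s_pos w w_peak.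
  by apply/L_nil/sword_nil; case: w_peak.
case/lastP: s s_nonnil IH L_closed s_pos w_peak => // s0 a _.
rewrite size_rcons last_rcons; set m := (size s0).+1 => IH L_closed s_pos w_peak.
have a_gt0 : 0 < a by move: s_pos; rewrite all_rcons => /andP[].
have parent_w : parent_lang m L (parent_word m w).
  by apply: IH; [exact: all_pos_parent_seq | exact: peakless_parent].
have [sw _] := w_peak.
have le_m : {in w, forall x, x <= m}.
  by case/is_swordP: sw => letters _ x /letters; rewrite size_rcons => /andP[].
have count_m := sword_count_last sw.
have m_w : m \in w by rewrite -has_pred1 has_count count_m.
have [[w1 e] | [t [e mt]]] := peak_free_shape m_w le_m (fun x y => peakless_no_peak w_peak).
  by have := (L_closed _ parent_w).1; rewrite e parent_word_rcons in parent_w *.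
have [b a_eq] : exists b, a = b.+1 by exists a.-1; lia.
have := (L_closed _ parent_w).2; rewrite e count_m a_eq parent_word_nseq_cat //.
by case: b {a_eq} => [|b]; rewrite ?dup_rightmost_nseq_cat.
Qed.
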